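(* Let $T$ be a key with at most $n$ rows. Then $\mathrm{cap}_n(T)$ is also a key. Moreover, if $T'$ is another key of the same shape, then $\mathrm{cap}_n(T)\ge T'$ (entrywise) if and only if $T\ge T'$ (entrywise) and $\max(T')\le n$.
   Context: Tableaux are drawn in English convention with positive integer entries; $T_c$ denotes the set of entries of column $c$. A key is a tableau whose columns are strictly increasing top to bottom and satisfy $T_1\supseteq T_2\supseteq\cdots$. For a key $T$ with at most $n$ rows, $\mathrm{cap}_n(T)$ is obtained by replacing, in each column, the entries larger than $n$ by the largest integers in $[n]$ that are missing from that column, and then sorting each column increasingly. Inequalities between tableaux of the same shape are entrywise (cell by cell). *)

From mathcomp Require Import all_boot.
Set Implicit Arguments. Unset Strict Implicit. Unset Printing Implicit Defensive.

(* A tableau (English convention) is the list of its columns, left to right;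
   each column is the list of its entries read top to bottom. *)
Definition tableau := seq (seq nat).

Definition is_tableau (T : tableau) : bool :=
  all (fun col => (0 < size col) && all (fun x => 0 < x) col) T &&
  sorted geq (map size T).

Definition col_subset (D C : seq nat) : bool := all (fun x => x \in C) D.

(* A key: a tableau whose columns strictly increase top to bottom and with
   T_1 ⊇ T_2 ⊇ ... (consecutive inclusions; the relation is transitive). *)
Definition is_key (T : tableau) : bool :=
  is_tableau T &&
  all (fun col => sorted ltn col) T &&
  sorted (fun C D => col_subset D C) T.

Definition at_most_rows (n : nat) (T : tableau) : bool :=
  all (fun col => size col <= n) T.

Definition tab_shape (T : tableau) : seq nat := map size T.

(* cap_n on one column C: the entries > n (say k of them) are replaced by the
   k largest integers of [n] = {1..n} missing from C; then sort increasingly. *)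
Definition cap_col (n : nat) (C : seq nat) : seq nat :=
  let k := count (fun x => n < x) C in
  let missing := [seq i <- iota 1 n | i \notin C] in
  sort leq ([seq x <- C | x <= n] ++ drop (size missing - k) missing).

Definition cap (n : nat) (T : tableau) : tableau := map (cap_col n) T.

Definition entry (T : tableau) (c r : nat) : nat := nth 0 (nth [::] T c) r.

Definition tab_ge (T T' : tableau) : Prop :=
  tab_shape T = tab_shape T' /\
  forall c r, c < size T -> r < size (nth [::] T c) -> entry T' c r <= entry T c r.

Definition max_le (T : tableau) (n : nat) : bool :=
  all (fun col => all (fun x => x <= n) col) T.
Example cap_col_test : cap_col 3 [:: 1; 5] = [:: 1; 3]. Proof. by []. Qed.
Example cap_col_test2 : cap_col 4 [:: 2; 6; 7] = [:: 2; 3; 4]. Proof. by []. Qed.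

From mathcomp Require Import all_boot zify.
Set Implicit Arguments. Unset Strict Implicit. Unset Printing Implicit Defensive.

(* Two increasing columns B, A of the same length
   satisfy B <= A entrywise iff, for every v, A has at least as many entries
   >= v as B.  For a strictly increasing column C of positive integers with at
   most n cells, the number of entries >= v of cap_n(C) is
   min(#{c in C | c >= v}, n + 1 - v), the largest value this count can take on
   a strictly increasing column with entries in [n] dominated by C; this gives
   the equivalence.  Comparing these counts at v and
   v + 1 shows that y belongs to cap_n(C) iff 1 <= y <= n and either y is in C
   or C has at least n + 1 - y entries >= y, a condition monotone in C: hence
   cap_n preserves the inclusions between columns and cap_n(T) is a key. *)

Lemma all2_nthP (S T : Type) (r : S -> T -> bool) x0 y0 s t :
  reflect (size s = size t /\ forall i, i < size s -> r (nth x0 s i) (nth y0 t i))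
          (all2 r s t).
Proof.
elim: s t => [|x s IHs] [|y t] /=; try by constructor=> // -[].
apply: (iffP andP) => [[rxy /IHs [eq_st r_st]] | [[eq_st] r_st]].
  by split=> [|[|i]] //=; [rewrite eq_st | apply: r_st].
by split; [exact: (r_st 0) | apply/IHs; split=> // i; apply: (r_st i.+1)].
Qed.
Arguments all2_nthP {S T} r x0 y0 {s t}.

Lemma count_geq_all2 (s t : seq nat) v :
  all2 leq s t -> count (leq v) s <= count (leq v) t.
Proof.
elim: s t => [|x s IHs] [|y t] //= /andP[le_xy /IHs le_st].
by apply: leq_add le_st; case: (leqP v x) => // le_vx; rewrite (leq_trans le_vx le_xy).
Qed.

Lemma sorted_all2_count (s t : seq nat) :
  sorted leq s -> sorted leq t -> size s = size t ->
  (forall v, count (leq v) s <= count (leq v) t) -> all2 leq s t.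
Proof.
elim: t s => [|y t IHt] [|x s] //= sorted_xs sorted_yt [size_st] le_count.
have ge_x_s := order_path_min leq_trans sorted_xs.
have ge_y_t := order_path_min leq_trans sorted_yt.
have count_ge (u : seq nat) z : all (leq z) u -> count (leq z) u = size u.
  by move=> ge_z_u; apply/eqP; rewrite -all_count.
have le_xy : x <= y.
  have := le_count x; rewrite leqnn count_ge // size_st.
  by have := count_size (leq x) t; case: leqP => //=; lia.
rewrite le_xy IHt ?(path_sorted sorted_xs) ?(path_sorted sorted_yt) // => v.
case: (leqP v y) => [le_vy | lt_yv].
  rewrite (count_ge t) -?size_st ?count_size //.
  by apply/allP => z /(allP ge_y_t); apply: leq_trans.
by have := le_count v; rewrite (leqNgt v y) lt_yv /=; case: leqP => /=; lia.
Qed.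

Lemma count_geq_succ (s : seq nat) y :
  count (leq y) s = count_mem y s + count (leq y.+1) s.
Proof.
by elim: s => //= x s ->; case: (ltngtP x y) => /=; lia.
Qed.

Lemma mem_count_geq (s : seq nat) y :
  uniq s -> (y \in s) = (count (leq y.+1) s < count (leq y) s).
Proof.
by move=> uniq_s; rewrite (count_geq_succ s y) count_uniq_mem //; case: (y \in s) => /=; lia.
Qed.

Lemma count_geq_drop (s : seq nat) t v : sorted leq s ->
  count (leq v) (drop t s) = minn (size s - t) (count (leq v) s).
Proof.
elim: s t => [|x s IHs] [|t] sorted_xs //=.
  by have := count_size (leq v) s; lia.
rewrite subSS IHs ?(path_sorted sorted_xs) //.
case: (leqP v x) => [le_vx | _]; last by rewrite add0n.
have /eqP -> : count (leq v) s == size s.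
  rewrite -all_count; apply/allP => z /(allP (order_path_min leq_trans sorted_xs)).
  exact: leq_trans.
lia.
Qed.

Lemma count_geq_iota m n v : count (leq v) (iota m n) = n - (v - m).
Proof. by elim: n m => [|n IHn] m /=; rewrite ?sub0n // IHn; case: leqP; lia. Qed.

Lemma count_geq_bounded (s : seq nat) n v :
  uniq s -> all (fun x => x <= n) s -> count (leq v) s <= n.+1 - v.
Proof.
move=> uniq_s le_s_n; rewrite -size_filter -(size_iota v (n.+1 - v)).
apply: uniq_leq_size (filter_uniq _ uniq_s) _ => x.
by rewrite mem_filter mem_iota => /andP[le_vx /(allP le_s_n)]; lia.
Qed.

Lemma count_geq_filter_leq (s : seq nat) n v : v <= n.+1 ->
  count (leq v) [seq x <- s | x <= n] + count (fun x => n < x) s = count (leq v) s.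
Proof. by move=> le_v_n; elim: s => //= x s <-; case: (leqP x n) => /=; lia. Qed.

Lemma count_geq0 (s : seq nat) : count (leq 0) s = size s.
Proof. by rewrite -(count_predT s); apply: eq_count. Qed.

Definition key_column n (C : seq nat) :=
  [&& sorted ltn C, all (fun x => 0 < x) C & size C <= n].

Definition missing n (C : seq nat) := [seq i <- iota 1 n | i \notin C].

Lemma key_column_uniq n C : key_column n C -> uniq C.
Proof. by case/and3P=> /(sorted_uniq ltn_trans ltnn). Qed.

Lemma cap_col_bounded n C : all (fun x => x <= n) (cap_col n C).
Proof.
apply/allP => x; rewrite mem_sort mem_cat mem_filter.
by case/orP=> [/andP[] // | /mem_drop]; rewrite mem_filter mem_iota; lia.
Qed.

Section CapColumn.

Variables (n : nat) (C : seq nat).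
Hypothesis keyC : key_column n C.

Local Notation low := [seq x <- C | x <= n].
Local Notation high := (count (fun x => n < x) C).

Let uniq_C : uniq C := key_column_uniq keyC.

Lemma perm_low_missing : perm_eq (low ++ missing n C) (iota 1 n).
Proof.
case/and3P: keyC => _ pos_C _.
apply: uniq_perm; rewrite ?iota_uniq //.
  rewrite cat_uniq !filter_uniq ?iota_uniq // andbT.
  by apply/hasPn => x; rewrite !mem_filter => /andP[/negbTE -> _]; rewrite andbF.
move=> x; rewrite mem_cat !mem_filter mem_iota.
by case xC: (x \in C); rewrite /= ?andbF ?orbF; have := allP pos_C x; rewrite xC; lia.
Qed.

Lemma size_low_missing : size low + size (missing n C) = n.
Proof. by rewrite -size_cat (perm_size perm_low_missing) size_iota. Qed.

Lemma size_low_high : size low + high = size C.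
Proof. by have := count_geq_filter_leq C (leq0n n.+1); rewrite !count_geq0. Qed.

Lemma high_le_missing : high <= size (missing n C).
Proof.
by have := size_low_missing; have := size_low_high; case/and3P: keyC => _ _; lia.
Qed.

Lemma size_cap_col : size (cap_col n C) = size C.
Proof.
rewrite size_sort size_cat size_drop -/(missing n C).
have := high_le_missing; have := size_low_high.
set m := size (missing n C); lia.
Qed.

Lemma sorted_cap_col : sorted ltn (cap_col n C).
Proof.
rewrite ltn_sorted_uniq_leq sort_sorted ?andbT; last exact: leq_total.
rewrite sort_uniq -/(missing n C).
apply: subseq_uniq (cat_subseq (subseq_refl _) (drop_subseq _ _)) _.
by rewrite (perm_uniq perm_low_missing) iota_uniq.
Qed.

Lemma count_cap_col v :
  count (leq v) (cap_col n C) = minn (count (leq v) C) (n.+1 - v).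
Proof.
case/and3P: keyC => _ _ le_C_n.
have [-> | v_gt0] := posnP v.
  by rewrite !count_geq0 size_cap_col; lia.
have [lt_nv | le_vn] := ltnP n v.
  have /eqP -> : count (leq v) (cap_col n C) == 0.
    rewrite -leqn0 leqNgt -has_count; apply/hasPn => x.
    by move/(allP (cap_col_bounded n C)) => /=; lia.
  lia.
rewrite /cap_col -/(missing n C) count_sort count_cat.
rewrite count_geq_drop ?(sorted_filter leq_trans _ (iota_sorted 1 n)) //.
rewrite subKn ?high_le_missing //.
have <- := count_geq_filter_leq C (leqW le_vn).
have <- : count (leq v) low + count (leq v) (missing n C) = n.+1 - v.
  by rewrite -count_cat (permP perm_low_missing) count_geq_iota; lia.
by rewrite addn_minr.
Qed.

Lemma mem_cap_col y :
  (y \in cap_col n C) = (0 < y <= n) && ((y \in C) || (n.+1 - y <= count (leq y) C)).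
Proof.
have uniq_cap := sorted_uniq ltn_trans ltnn sorted_cap_col.
rewrite mem_count_geq // !count_cap_col (count_geq_succ C y) count_uniq_mem //.
case/and3P: keyC => _ pos_C le_C_n; have := count_size (leq y.+1) C.
case: (boolP (y \in C)) => [yC | _] /=; last lia.
by have := allP pos_C y yC; lia.
Qed.

End CapColumn.

Lemma cap_col_pos n C : all (fun x => 0 < x) C -> all (fun x => 0 < x) (cap_col n C).
Proof.
move=> pos_C; apply/allP => x; rewrite mem_sort mem_cat mem_filter.
by case/orP=> [/andP[_ /(allP pos_C)] // | /mem_drop]; rewrite mem_filter mem_iota; lia.
Qed.

Lemma cap_col_subset n C D : key_column n C -> key_column n D ->
  col_subset D C -> col_subset (cap_col n D) (cap_col n C).
Proof.
move=> keyC keyD /allP sub_DC; apply/allP => y.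
rewrite !mem_cap_col // => /andP[-> /orP[yD | le_count]] /=; first by rewrite sub_DC.
apply/orP; right; apply: leq_trans le_count _.
rewrite -!size_filter; apply: uniq_leq_size => [|x].
  exact/filter_uniq/(key_column_uniq keyD).
by rewrite !mem_filter => /andP[-> /sub_DC].
Qed.

Lemma all2_leq_cap_col n C B : key_column n C -> sorted ltn B ->
  all2 leq B (cap_col n C) = all2 leq B C && all (fun x => x <= n) B.
Proof.
move=> keyC lt_B; have := lt_B; rewrite ltn_sorted_uniq_leq => /andP[uniq_B le_B].
have le_C : sorted leq C by case/and3P: keyC => + _ _; rewrite ltn_sorted_uniq_leq => /andP[].
have le_cap : sorted leq (cap_col n C) by apply: sort_sorted; apply: leq_total.
apply/idP/andP => [le_B_cap | [le_B_C le_B_n]].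
  have /(all2_nthP leq 0 0) [size_B le_nth] := le_B_cap.
  split.
    apply: sorted_all2_count; rewrite // -?(size_cap_col keyC) // => v.
    by apply: leq_trans (count_geq_all2 v le_B_cap) _; rewrite count_cap_col // geq_minl.
  apply/(all_nthP 0) => i lt_iB; apply: leq_trans (le_nth i lt_iB) _.
  by apply: (allP (cap_col_bounded n C)); rewrite mem_nth // -size_B.
have /(all2_nthP leq 0 0) [size_B _] := le_B_C.
apply: sorted_all2_count; rewrite // ?size_cap_col // => v.
by rewrite count_cap_col // leq_min count_geq_all2 // count_geq_bounded.
Qed.

Lemma key_columns n T : is_key T -> at_most_rows n T -> all (key_column n) T.
Proof.
case/andP=> /andP[/andP[/allP cols_ok _] /allP lt_cols] _ /allP rows_T.
apply/allP => C CT; rewrite /key_column lt_cols // rows_T // andbT.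
by case/andP: (cols_ok C CT).
Qed.

Lemma is_key_cap n T : is_key T -> at_most_rows n T -> is_key (cap n T).
Proof.
move=> keyT rows_T; have all_keys := key_columns keyT rows_T.
have /allP keys := all_keys.
case/andP: keyT => /andP[/andP[/allP cols_ok shape_T] _] incl_T.
have size_cap : map size (cap n T) = map size T.
  by rewrite -map_comp; apply/eq_in_map => C /keys /size_cap_col.
rewrite /is_key /is_tableau size_cap shape_T /cap sorted_map !all_map !andbT.
rewrite -andbA; apply/and3P; split.
- apply/allP => C CT /=; rewrite size_cap_col ?keys //.
  by case/andP: (cols_ok C CT) => -> /(cap_col_pos n).
- by apply/allP => C /keys /sorted_cap_col.
- apply: (sub_in_sorted _ all_keys incl_T) => C D keyC keyD /=.
  exact: cap_col_subset.
Qed.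

Lemma all2_leq_cap n T T' : all (key_column n) T -> all (sorted ltn) T' ->
  all2 (all2 leq) T' (cap n T) = all2 (all2 leq) T' T && max_le T' n.
Proof.
rewrite /max_le; elim: T' T => [|B T' IHT'] [|C T] //= /andP[keyC keyT] /andP[lt_B lt_T'].
by rewrite all2_leq_cap_col // IHT' // andbACA.
Qed.

Lemma tab_geP X T' : reflect (tab_ge X T') (all2 (all2 leq) T' X).
Proof.
apply: (iffP (all2_nthP _ [::] [::])) => [[size_T' le_cols] | [shape_eq le_entries]].
  have le_col c : c < size X -> all2 leq (nth [::] T' c) (nth [::] X c).
    by move=> lt_cX; apply: le_cols; rewrite size_T'.
  split=> [|c r lt_cX lt_r].
    apply: (@eq_from_nth _ 0) => [|c]; rewrite !size_map ?size_T' // => lt_cX.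
    rewrite !(nth_map [::]) ?size_T' //.
    by case/(all2_nthP leq 0 0): (le_col c lt_cX).
  have /(all2_nthP leq 0 0) [size_col le_col_c] := le_col c lt_cX.
  by rewrite /entry le_col_c // size_col.
rewrite /tab_shape in shape_eq.
have size_T' : size T' = size X by rewrite -(size_map size X) shape_eq size_map.
split=> // c lt_cT'; apply/(all2_nthP leq 0 0).
have lt_cX : c < size X by rewrite -size_T'.
have size_col : size (nth [::] T' c) = size (nth [::] X c).
  by rewrite -!(nth_map [::] 0 size) // shape_eq.
by split=> // r lt_r; apply: le_entries; rewrite -?size_col.
Qed.

Theorem lemma3p2 (n : nat) (T : tableau) :
  is_key T -> at_most_rows n T ->
  is_key (cap n T) /\
  (forall T' : tableau, is_key T' -> tab_shape T' = tab_shape T ->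
     (tab_ge (cap n T) T' <-> tab_ge T T' /\ max_le T' n)).
Proof.
move=> keyT rows_T; split=> [|T' keyT' _]; first exact: is_key_cap.
have keys := key_columns keyT rows_T.
have lt_T' : all (sorted ltn) T' by case/andP: keyT' => /andP[_ ->].
split=> [/tab_geP | [/tab_geP le_T max_T']].
  by rewrite all2_leq_cap // => /andP[/tab_geP le_T ->].
by apply/tab_geP; rewrite all2_leq_cap // max_T' andbT.
Qed.
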